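(* Let $n\ge5$, $x_1,\dots,x_{n-1}>0$, $\gamma,\delta>0$ with $\gamma\ne1\ne\delta$, $x_0=1$, and let $\mathbf{R}$ be the $n\times n$ matrix with entries $r_{ij}=x_{j-1}/x_{i-1}$ except $r_{12}=\delta x_1$, $r_{21}=1/(\delta x_1)$, $r_{34}=\gamma x_3/x_2$, $r_{43}=x_2/(\gamma x_3)$. Let $\mathbf{w}^{EM}$ be its principal right eigenvector. Then for $i=5,\dots,n$: $\delta>1$ iff $w_1^{EM}/w_i^{EM}>x_{i-1}$, and $\delta<1$ iff $w_1^{EM}/w_i^{EM}<x_{i-1}$.
   Context: The principal right eigenvector is the positive (Perron) eigenvector belonging to the largest eigenvalue. *)

From HB Require Import structures.
From mathcomp Require Import all_boot all_order all_algebra.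
From mathcomp Require Import reals.
Set Implicit Arguments. Unset Strict Implicit. Unset Printing Implicit Defensive.
Import Order.TTheory GRing.Theory Num.Theory.
Local Open Scope ring_scope.

(* Indices are 0-based: paper index i (1..n) is Rocq index i-1 : 'I_n.
   x : nat -> R with x 0 = 1 (paper's x_0 = 1). *)
Definition EM_matrix (R : realType) (n : nat) (x : nat -> R) (gamma delta : R)
  : 'M[R]_n :=
  \matrix_(i < n, j < n)
    if (val i == 0%N) && (val j == 1%N) then delta * x 1%N
    else if (val i == 1%N) && (val j == 0%N) then (delta * x 1%N)^-1
    else if (val i == 2%N) && (val j == 3%N) then gamma * x 3%N / x 2%N
    else if (val i == 3%N) && (val j == 2%N) then x 2%N / (gamma * x 3%N)
    else x (val j) / x (val i).

Definition principal_right_eigenvector (R : realType) (n : nat)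
  (A : 'M[R]_n) (w : 'cV[R]_n) : Prop :=
  exists lam : R,
    [/\ eigenvalue A lam,
        (forall mu : R, eigenvalue A mu -> mu <= lam),
        A *m w = lam *: w
      & forall i : 'I_n, 0 < w i 0].

From HB Require Import structures.
From mathcomp Require Import all_boot all_order all_algebra.
From mathcomp Require Import reals.
Set Implicit Arguments. Unset Strict Implicit. Unset Printing Implicit Defensive.
Import Order.TTheory GRing.Theory Num.Theory.
Local Open Scope ring_scope.

(* Rows [i >= 5] (paper indexing) of the perturbed matrix are still the
   consistent rows [x_j / x_i], so [(R w)_i = S / x_i] with
   [S = sum_j x_j w_j]; row 1 differs from [x_j] only in column 2, so
   [(R w)_1 = S + (delta - 1) x_1 w_2].  Hence
   [lambda (w_1 - x_i w_i) = (delta - 1) x_1 w_2], and since [lambda], [x_1]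
   and [w_2] are positive, [w_1 / w_i - x_i] has the sign of [delta - 1]. *)

Lemma sign_transfer (R : realFieldType) (lam c d a b : R) :
  0 < lam -> 0 < c -> lam * (a - b) = (d - 1) * c ->
  ((1 < d) <-> (b < a)) /\ ((d < 1) <-> (a < b)).
Proof.
move=> lam_gt0 c_gt0 gap.
have sign_ab : Num.sg (a - b) = Num.sg (d - 1).
  have := congr1 Num.sg gap.
  by rewrite !sgrM (gtr0_sg lam_gt0) (gtr0_sg c_gt0) mul1r mulr1.
rewrite -[1 < d]subr_gt0 -[b < a]subr_gt0 -[d < 1]subr_lt0 -[a < b]subr_lt0.
by rewrite -!sgr_cp0 sign_ab.
Qed.

Definition weighted_sum (R : pzRingType) (n : nat) (x : nat -> R) (w : 'cV[R]_n) : R :=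
  \sum_j x (val j) * w j 0.

Lemma weighted_sum_gt0 (R : numDomainType) (n : nat) (x : nat -> R) (w : 'cV[R]_n)
  (i : 'I_n) :
  (forall j : 'I_n, 0 < x (val j)) -> (forall j : 'I_n, 0 < w j 0) ->
  0 < weighted_sum x w.
Proof.
move=> x_gt0 w_gt0; rewrite /weighted_sum (bigD1 i) //=.
apply: ltr_wpDr; last exact: mulr_gt0 (x_gt0 i) (w_gt0 i).
by apply: sumr_ge0 => j _; exact: mulr_ge0 (ltW (x_gt0 j)) (ltW (w_gt0 j)).
Qed.

Section EMRows.

Variables (R : realType) (n : nat) (x : nat -> R) (gamma delta : R) (w : 'cV[R]_n).
Let A := EM_matrix n x gamma delta.

Lemma EM_matrix_consistent_row (i j : 'I_n) :
  (4 <= val i)%N -> A i j = x (val j) / x (val i).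
Proof.
move=> i_ge4; rewrite /A mxE.
by case: (val i) i_ge4 => [|[|[|[|k]]]].
Qed.

Lemma EM_mulmx_consistent_row (i : 'I_n) :
  (4 <= val i)%N -> (A *m w) i 0 = weighted_sum x w / x (val i).
Proof.
move=> i_ge4; rewrite mxE /weighted_sum mulr_suml; apply: eq_bigr => j _.
by rewrite EM_matrix_consistent_row // mulrAC.
Qed.

Hypothesis x0 : x 0%N = 1.

Lemma EM_matrix_first_row (i0 j : 'I_n) :
  val i0 = 0%N -> A i0 j = x (val j) + (if val j == 1%N then (delta - 1) * x 1%N else 0).
Proof.
move=> i0_0; rewrite /A mxE i0_0 /=.
case: eqP => [->|_]; last by rewrite x0 divr1 addr0.
by rewrite mulrBl mul1r addrC subrK.
Qed.

Lemma EM_mulmx_first_row (i0 j1 : 'I_n) :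
  val i0 = 0%N -> val j1 = 1%N ->
  (A *m w) i0 0 = weighted_sum x w + (delta - 1) * x 1%N * w j1 0.
Proof.
move=> i0_0 j1_1; rewrite mxE.
under eq_bigr => j _ do rewrite EM_matrix_first_row // mulrDl.
rewrite big_split /=; congr (_ + _).
rewrite (bigD1 j1) //= j1_1 eqxx big1 ?addr0 // => j j_neq.
suff -> : (val j == 1%N) = false by rewrite mul0r.
by apply: contraNF j_neq => /eqP j_1; apply/eqP/val_inj; rewrite j_1 j1_1.
Qed.

Lemma EM_eigenvector_gap (lam : R) (i0 j1 i : 'I_n) :
  A *m w = lam *: w -> val i0 = 0%N -> val j1 = 1%N -> (4 <= val i)%N ->
  x (val i) != 0 ->
  lam * (w i0 0 - x (val i) * w i 0) = (delta - 1) * (x 1%N * w j1 0).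
Proof.
move=> eig i0_0 j1_1 i_ge4 xi_neq0.
have eig_row (k : 'I_n) : lam * w k 0 = (A *m w) k 0 by rewrite eig mxE.
rewrite mulrBr eig_row (EM_mulmx_first_row i0_0 j1_1) mulrCA eig_row.
rewrite EM_mulmx_consistent_row // mulrCA divff // mulr1.
by rewrite addrAC subrr add0r mulrA.
Qed.

End EMRows.

Theorem mainTheorem17 (R : realType) (n : nat) (x : nat -> R) (gamma delta : R)
  (w : 'cV[R]_n) :
  (5 <= n)%N ->
  x 0%N = 1 ->
  (forall k : nat, (1 <= k < n)%N -> 0 < x k) ->
  0 < gamma -> 0 < delta -> gamma != 1 -> delta != 1 ->
  principal_right_eigenvector (EM_matrix n x gamma delta) w ->
  forall i0 i : 'I_n, val i0 = 0%N -> (4 <= val i)%N ->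
    ((1 < delta) <-> (x (val i) < w i0 0 / w i 0)) /\
    ((delta < 1) <-> (w i0 0 / w i 0 < x (val i))).
Proof.
move=> n_ge5 x0 x_pos _ _ _ _ [lam [_ _ eig w_gt0]] i0 i i0_0 i_ge4.
have x_gt0 (j : 'I_n) : 0 < x (val j).
  case: (posnP (val j)) => [->|j_gt0]; first by rewrite x0 ltr01.
  by apply: x_pos; rewrite j_gt0 ltn_ord.
have lam_gt0 : 0 < lam.
  have row_i : lam * w i 0 = weighted_sum x w / x (val i).
    by rewrite -(EM_mulmx_consistent_row x gamma delta) // eig mxE.
  by rewrite -(pmulr_lgt0 _ (w_gt0 i)) row_i divr_gt0 // (weighted_sum_gt0 i).
pose j1 : 'I_n := Ordinal (leq_trans (isT : (1 < 5)%N) n_ge5).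
have gap := EM_eigenvector_gap x0 eig i0_0 (erefl : val j1 = 1%N) i_ge4
  (lt0r_neq0 (x_gt0 i)).
have := sign_transfer lam_gt0 (mulr_gt0 (x_gt0 j1) (w_gt0 j1)) gap.
by rewrite ltr_pdivlMr // ltr_pdivrMr.
Qed.
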